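(* Let $n < 8$. Let $\phi$ and $\psi$ be constant-free, negation-free linear formulae on the same set of $n$ variables, and suppose $\phi \to \psi$ is a non-trivial linear inference. Then $\phi$ is $\{\mathsf{s},\mathsf{m}\}$-derivable to $\psi$ without units, i.e. $\phi \overset{*}{\rightsquigarrow}_{\{\mathsf{s},\mathsf{m}\}} \psi$.
   Context: Fix a countably infinite set of variables. Linear formulae on a finite set $\mathcal{V}$ of variables are defined inductively: - $\top$ and $\bot$ are linear formulae on $\emptyset$. - $x$ and $\neg x$ are linear formulae on $\{x\}$. - If $\phi$ is on $\mathcal{V}_1$, $\psi$ is on $\mathcal{V}_2$ and $\mathcal{V}_1\cap\mathcal{V}_2=\emptyset$, then $\phi\lor\psi$ and $\phi\land\psi$ are on $\mathcal{V}_1\cup\mathcal{V}_2$. A formula is constant-free if it contains no $\top,\bot$, and negation-free if it contains no $\neg x$. Formulae are evaluated under Boolean assignments as usual. A linear inference $\phi\to\psi$ is a pair of linear formulae such that every assignment satisfying $\phi$ satisfies $\psi$. An inference $\phi\to\psi$ is trivial at a variable $x$ if $\phi[\top/x]\to\psi[\bot/x]$ is again a valid inference. It is trivial if it is trivial at one of its variables, and non-trivial otherwise. $\sim_{\mathsf{ac}}$ is the smallest equivalence relation on formulae, closed under $\land$- and $\lor$-contexts, containing commutativity and associativity of $\land$ and $\lor$. For a set $S$ of linear inferences, $\to_S$ is the smallest relation containing $S$ and closed under substitution (of linear formulae for variables, keeping linearity) and contexts. We write $\phi\rightsquigarrow_S\psi$ if $\phi\sim_{\mathsf{ac}}\phi'\to_S\psi'\sim_{\mathsf{ac}}\psi$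 for some $\phi',\psi'$, and $\overset{*}{\rightsquigarrow}_S$ for the reflexive-transitive closure of $\rightsquigarrow_S\cup\sim_{\mathsf{ac}}$ ($S$-derivability without units). Switch $\mathsf{s}$ is $x\land(y\lor z)\to(x\land y)\lor z$; medial $\mathsf{m}$ is $(w\land x)\lor(y\land z)\to(w\lor y)\land(x\lor z)$. *)

From mathcomp Require Import all_boot.
From Stdlib Require Import Relations.Relation_Operators.
Set Implicit Arguments. Unset Strict Implicit. Unset Printing Implicit Defensive.

Inductive formula : Type :=
| FTop : formula
| FBot : formula
| FVar : nat -> formula
| FNeg : nat -> formula
| FAnd : formula -> formula -> formula
| FOr  : formula -> formula -> formula.

Fixpoint vars (f : formula) : seq nat :=
  match f with
  | FTop | FBot => [::]
  | FVar x | FNeg x => [:: x]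
  | FAnd a b | FOr a b => vars a ++ vars b
  end.

(* Linear formula: every variable occurs at most once (then it is a linear
   formula on the set of its variables, built as in the inductive definition). *)
Definition linear (f : formula) : bool := uniq (vars f).

Fixpoint constant_free (f : formula) : bool :=
  match f with
  | FTop | FBot => false
  | FVar _ | FNeg _ => true
  | FAnd a b | FOr a b => constant_free a && constant_free b
  end.

Fixpoint negation_free (f : formula) : bool :=
  match f with
  | FNeg _ => false
  | FTop | FBot | FVar _ => true
  | FAnd a b | FOr a b => negation_free a && negation_free b
  end.

Fixpoint eval (v : nat -> bool) (f : formula) : bool :=
  match f with
  | FTop => true
  | FBot => false
  | FVar x => v x
  | FNeg x => ~~ v x
  | FAnd a b => eval v a && eval v b
  | FOr a b => eval v a || eval v b
  end.

Definition valid (phi psi : formula) : Prop :=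
  forall v : nat -> bool, eval v phi -> eval v psi.

(* Negation (De Morgan dual) of a formula, used to substitute into ~ x. *)
Fixpoint fneg (f : formula) : formula :=
  match f with
  | FTop => FBot
  | FBot => FTop
  | FVar x => FNeg x
  | FNeg x => FVar x
  | FAnd a b => FOr (fneg a) (fneg b)
  | FOr a b => FAnd (fneg a) (fneg b)
  end.

Fixpoint subst (s : nat -> formula) (f : formula) : formula :=
  match f with
  | FTop => FTop
  | FBot => FBot
  | FVar x => s x
  | FNeg x => fneg (s x)
  | FAnd a b => FAnd (subst s a) (subst s b)
  | FOr a b => FOr (subst s a) (subst s b)
  end.

Definition subst1 (x : nat) (c : formula) : formula -> formula :=
  subst (fun y => if y == x then c else FVar y).

Definition trivial_at (phi psi : formula) (x : nat) : Prop :=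
  valid (subst1 x FTop phi) (subst1 x FBot psi).

Definition inf_vars (phi psi : formula) : seq nat := vars phi ++ vars psi.

Definition nontrivial (phi psi : formula) : Prop :=
  forall x, x \in inf_vars phi psi -> ~ trivial_at phi psi x.

Inductive ac : formula -> formula -> Prop :=
| ac_refl a : ac a a
| ac_sym a b : ac a b -> ac b a
| ac_trans a b c : ac a b -> ac b c -> ac a c
| ac_andC a b : ac (FAnd a b) (FAnd b a)
| ac_orC a b : ac (FOr a b) (FOr b a)
| ac_andA a b c : ac (FAnd a (FAnd b c)) (FAnd (FAnd a b) c)
| ac_orA a b c : ac (FOr a (FOr b c)) (FOr (FOr a b) c)
| ac_andL a a' b : ac a a' -> ac (FAnd a b) (FAnd a' b)
| ac_andR a b b' : ac b b' -> ac (FAnd a b) (FAnd a b')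
| ac_orL a a' b : ac a a' -> ac (FOr a b) (FOr a' b)
| ac_orR a b b' : ac b b' -> ac (FOr a b) (FOr a b').

Definition infset := formula -> formula -> Prop.

Inductive rstep (S : infset) : formula -> formula -> Prop :=
| rs_base l r (s : nat -> formula) :
    S l r -> linear (subst s l) -> linear (subst s r) ->
    rstep S (subst s l) (subst s r)
| rs_andL a a' b : rstep S a a' -> rstep S (FAnd a b) (FAnd a' b)
| rs_andR a b b' : rstep S b b' -> rstep S (FAnd a b) (FAnd a b')
| rs_orL a a' b : rstep S a a' -> rstep S (FOr a b) (FOr a' b)
| rs_orR a b b' : rstep S b b' -> rstep S (FOr a b) (FOr a b').

Definition rsq (S : infset) (phi psi : formula) : Prop :=
  exists phi' psi', ac phi phi' /\ rstep S phi' psi' /\ ac psi' psi.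

Definition derivable (S : infset) : formula -> formula -> Prop :=
  clos_refl_trans formula (fun a b => rsq S a b \/ ac a b).

Definition vx := FVar 0. Definition vy := FVar 1.
Definition vz := FVar 2. Definition vw := FVar 3.

Definition switch_l := FAnd vx (FOr vy vz).
Definition switch_r := FOr (FAnd vx vy) vz.
Definition medial_l := FOr (FAnd vw vx) (FAnd vy vz).
Definition medial_r := FAnd (FOr vw vy) (FOr vx vz).

Definition SM : infset := fun l r =>
  (l = switch_l /\ r = switch_r) \/ (l = medial_l /\ r = medial_r).

(* Induct on the number of models of phi.  If phi -> psi is valid and non-trivial but phi and
   psi are not AC-equivalent, then some single {s,m}-step phi ~> phi' keeps phi' -> psi valid
   and strictly enlarges the set of models of phi; phi' -> psi is still non-trivial, because
   phi -> phi' is valid and preserves the variables.  Up to AC and renaming there are only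
   finitely many premises on fewer than 8 variables and finitely many candidate conclusions,
   so the existence of such a step is established by a computation checked by reflection. *)

From mathcomp Require Import all_boot zify.
From Stdlib Require Import Relations.Relation_Operators.
From HB Require Import structures.
Set Implicit Arguments. Unset Strict Implicit. Unset Printing Implicit Defensive.

Fixpoint formula_eqb (a b : formula) : bool :=
  match a, b with
  | FTop, FTop | FBot, FBot => true
  | FVar x, FVar y | FNeg x, FNeg y => x == y
  | FAnd a1 a2, FAnd b1 b2 | FOr a1 a2, FOr b1 b2 =>
      formula_eqb a1 b1 && formula_eqb a2 b2
  | _, _ => false
  end.

Lemma formula_eqbP : Equality.axiom formula_eqb.
Proof.
elim=> [||x|x|a1 IH1 a2 IH2|a1 IH1 a2 IH2] [||y|y|b1 b2|b1 b2] /=;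
  try by constructor.
- by apply: (iffP eqP) => [->|[]].
- by apply: (iffP eqP) => [->|[]].
- by apply: (iffP andP) => [[/IH1 -> /IH2 ->]|[<- <-]]; split; [apply/IH1|apply/IH2].
- by apply: (iffP andP) => [[/IH1 -> /IH2 ->]|[<- <-]]; split; [apply/IH1|apply/IH2].
Qed.

HB.instance Definition _ := hasDecEq.Build formula formula_eqbP.

Definition conn (b : bool) := if b then FAnd else FOr.

Definition is_conn (b : bool) (f : formula) : bool :=
  match f with FAnd _ _ => b | FOr _ _ => ~~ b | _ => false end.

Fixpoint ren (r : nat -> nat) (f : formula) : formula :=
  match f with
  | FVar x => FVar (r x)
  | FNeg x => FNeg (r x)
  | FAnd a b => FAnd (ren r a) (ren r b)
  | FOr a b => FOr (ren r a) (ren r b)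
  | c => c
  end.

Lemma vars_conn b x y : vars (conn b x y) = vars x ++ vars y.
Proof. by case: b. Qed.

Lemma constant_free_conn b x y :
  constant_free (conn b x y) = constant_free x && constant_free y.
Proof. by case: b. Qed.

Lemma negation_free_conn b x y :
  negation_free (conn b x y) = negation_free x && negation_free y.
Proof. by case: b. Qed.

Lemma vars_ren r f : vars (ren r f) = map r (vars f).
Proof. by elim: f => //= a -> b ->; rewrite map_cat. Qed.

Lemma vars_fneg f : vars (fneg f) = vars f.
Proof. by elim: f => //= a -> b ->. Qed.

Lemma vars_subst s f : vars (subst s f) = flatten [seq vars (s x) | x <- vars f].
Proof.
elim: f => //= [x|x|a -> b ->|a -> b ->]; rewrite ?vars_fneg ?cats0 //.
- by rewrite map_cat flatten_cat.
- by rewrite map_cat flatten_cat.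
Qed.

Lemma constant_free_vars f : constant_free f -> vars f != [::].
Proof. by elim: f => //= a IHa b _ /andP [/IHa]; case: (vars a). Qed.

Lemma constant_free_ren r f : constant_free (ren r f) = constant_free f.
Proof. by elim: f => //= a -> b ->. Qed.

Lemma negation_free_ren r f : negation_free (ren r f) = negation_free f.
Proof. by elim: f => //= a -> b ->. Qed.

Lemma eval_fneg v f : eval v (fneg f) = ~~ eval v f.
Proof.
by elim: f => //= [x|a -> b ->|a -> b ->]; rewrite ?negb_or ?negb_and ?negbK.
Qed.

Lemma eval_ren v r f : eval v (ren r f) = eval (v \o r) f.
Proof. by elim: f => //= a -> b ->. Qed.

Lemma eval_subst v s f : eval v (subst s f) = eval (fun x => eval v (s x)) f.
Proof. by elim: f => //= [x|a -> b ->|a -> b ->]; rewrite ?eval_fneg. Qed.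

Lemma eq_in_eval v w f : {in vars f, v =1 w} -> eval v f = eval w f.
Proof.
elim: f => //= [x|x|a IHa b IHb|a IHa b IHb] H; rewrite ?H ?inE //;
  by rewrite IHa ?IHb // => y Hy; apply: H; rewrite mem_cat Hy ?orbT.
Qed.

Lemma eval_monotone (v w : nat -> bool) f : negation_free f ->
  (forall x, v x -> w x) -> eval v f -> eval w f.
Proof.
move=> + Hvw; elim: f => //= [x _|a IHa b IHb /andP [Na Nb]|a IHa b IHb /andP [Na Nb]].
- exact: Hvw.
- by case/andP => /(IHa Na) -> /(IHb Nb).
- by case/orP => [/(IHa Na) ->|/(IHb Nb) ->]; rewrite ?orbT.
Qed.

Lemma ren_fneg r f : ren r (fneg f) = fneg (ren r f).
Proof. by elim: f => //= a -> b ->. Qed.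

Lemma ren_subst r s f : ren r (subst s f) = subst (fun x => ren r (s x)) f.
Proof. by elim: f => //= [x|a -> b ->|a -> b ->]; rewrite ?ren_fneg. Qed.

Lemma ren_comp r1 r2 f : ren r1 (ren r2 f) = ren (r1 \o r2) f.
Proof. by elim: f => //= a -> b ->. Qed.

Lemma eq_in_ren r1 r2 f : {in vars f, r1 =1 r2} -> ren r1 f = ren r2 f.
Proof.
elim: f => //= [x|x|a IHa b IHb|a IHa b IHb] H; rewrite ?H ?inE //;
  by rewrite IHa ?IHb // => y Hy; apply: H; rewrite mem_cat Hy ?orbT.
Qed.

Lemma ren_id f : ren id f = f.
Proof. by elim: f => //= a -> b ->. Qed.

Lemma ren_cancel r ri f : {in vars f, cancel r ri} -> ren ri (ren r f) = f.
Proof. by move=> H; rewrite ren_comp -[RHS]ren_id; apply: eq_in_ren. Qed.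

Lemma valid_trans a b c : valid a b -> valid b c -> valid a c.
Proof. by move=> Hab Hbc v /Hab /Hbc. Qed.

Lemma valid_ren r a b : valid a b -> valid (ren r a) (ren r b).
Proof. by move=> H v; rewrite !eval_ren; apply: H. Qed.

Lemma valid_subst s a b : valid a b -> valid (subst s a) (subst s b).
Proof. by move=> H v; rewrite !eval_subst; apply: H. Qed.

(** * AC-equivalence *)

Lemma ac_hom (F : formula -> formula) :
  (forall a b, F (FAnd a b) = FAnd (F a) (F b)) ->
  (forall a b, F (FOr a b) = FOr (F a) (F b)) ->
  forall a b, ac a b -> ac (F a) (F b).
Proof.
move=> Hand Hor a b; elim=> {a b} [a|a b _ H|a b c _ H1 _ H2|a b|a b|a b c|a b c
  |a a' b _ H|a b b' _ H|a a' b _ H|a b b' _ H]; rewrite ?Hand ?Hor.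
- exact: ac_refl.
- exact: ac_sym.
- exact: ac_trans H1 H2.
- exact: ac_andC.
- exact: ac_orC.
- exact: ac_andA.
- exact: ac_orA.
- exact: ac_andL.
- exact: ac_andR.
- exact: ac_orL.
- exact: ac_orR.
Qed.

Lemma ac_ren r a b : ac a b -> ac (ren r a) (ren r b).
Proof. exact: ac_hom. Qed.

Lemma ac_subst s a b : ac a b -> ac (subst s a) (subst s b).
Proof. exact: ac_hom. Qed.

Lemma ac_eval v a b : ac a b -> eval v a = eval v b.
Proof.
elim=> //= *; try congruence.
- by rewrite andbC.
- by rewrite orbC.
- by rewrite andbA.
- by rewrite orbA.
Qed.

Lemma ac_vars a b : ac a b -> perm_eq (vars a) (vars b).
Proof.
elim=> {a b} //= [a b _|a b c _ H1 _ H2|*|*|*|*|*|*|*|*].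
- by rewrite perm_sym.
- exact: perm_trans H1 H2.
- by rewrite perm_catC.
- by rewrite perm_catC.
- by rewrite catA.
- by rewrite catA.
- by rewrite perm_cat2r.
- by rewrite perm_cat2l.
- by rewrite perm_cat2r.
- by rewrite perm_cat2l.
Qed.

Lemma ac_negation_free a b : ac a b -> negation_free a = negation_free b.
Proof. by elim=> //= *; try congruence; rewrite ?andbA // andbC. Qed.

Lemma ac_is_conn c a b : ac a b -> is_conn c a = is_conn c b.
Proof. by elim=> //= *; congruence. Qed.

Lemma ac_linear a b : ac a b -> linear a = linear b.
Proof. by move=> H; rewrite /linear (perm_uniq (ac_vars H)). Qed.

Lemma valid_ac a a' b b' : ac a a' -> ac b b' -> valid a b -> valid a' b'.
Proof. by move=> Ha Hb H v; rewrite -(ac_eval v Ha) -(ac_eval v Hb); apply: H. Qed.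

Lemma ac_connC b x y : ac (conn b x y) (conn b y x).
Proof. by case: b; constructor. Qed.

Lemma ac_connA b x y z : ac (conn b x (conn b y z)) (conn b (conn b x y) z).
Proof. by case: b; constructor. Qed.

Lemma ac_connL b x x' y : ac x x' -> ac (conn b x y) (conn b x' y).
Proof. by case: b; constructor. Qed.

Lemma ac_connR b x y y' : ac y y' -> ac (conn b x y) (conn b x y').
Proof. by case: b; constructor. Qed.

Lemma ac_conn b x x' y y' : ac x x' -> ac y y' -> ac (conn b x y) (conn b x' y').
Proof. by move=> Hx Hy; apply: ac_trans (ac_connL _ _ Hx) (ac_connR _ _ Hy). Qed.

Lemma ac_connCA b x y z : ac (conn b x (conn b y z)) (conn b y (conn b x z)).
Proof.
apply: ac_trans (ac_connA _ _ _ _) _; apply: ac_trans (ac_connL _ _ (ac_connC _ _ _)) _.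
exact: ac_sym (ac_connA _ _ _ _).
Qed.

Fixpoint bigconn (b : bool) (l : seq formula) : formula :=
  match l with
  | [::] => FTop
  | [:: x] => x
  | x :: l' => conn b x (bigconn b l')
  end.

Fixpoint spine (b : bool) (f : formula) : seq formula :=
  match f with
  | FAnd x y => if b then x :: spine b y else [:: f]
  | FOr x y => if b then [:: f] else x :: spine b y
  | _ => [:: f]
  end.

Fixpoint juncts (b : bool) (f : formula) : seq formula :=
  match f with
  | FAnd x y => if b then juncts b x ++ juncts b y else [:: f]
  | FOr x y => if b then [:: f] else juncts b x ++ juncts b y
  | _ => [:: f]
  end.

Lemma bigconn_cons b x l : l != [::] -> bigconn b (x :: l) = conn b x (bigconn b l).
Proof. by case: l. Qed.

Lemma vars_bigconn b l : l != [::] -> vars (bigconn b l) = flatten (map vars l).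
Proof.
elim: l => // x [|y l] IH _; first by rewrite /= cats0.
by rewrite bigconn_cons // vars_conn IH.
Qed.

Lemma constant_free_bigconn b l : l != [::] ->
  constant_free (bigconn b l) = all constant_free l.
Proof.
elim: l => // x [|y l] IH _; first by rewrite /= andbT.
by rewrite bigconn_cons // constant_free_conn IH.
Qed.

Lemma negation_free_bigconn b l : l != [::] ->
  negation_free (bigconn b l) = all negation_free l.
Proof.
elim: l => // x [|y l] IH _; first by rewrite /= andbT.
by rewrite bigconn_cons // negation_free_conn IH.
Qed.

Lemma bigconn_context (R : formula -> formula -> Prop) b l1 l2 c c' :
  (forall x y z, R x y -> R (conn b x z) (conn b y z)) ->
  (forall x y z, R x y -> R (conn b z x) (conn b z y)) ->
  R c c' -> R (bigconn b (l1 ++ c :: l2)) (bigconn b (l1 ++ c' :: l2)).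
Proof.
move=> HL HR H; elim: l1 => [|x l1 IH]; first by case: l2 => //= *; apply: HL.
have Hne c0 : l1 ++ c0 :: l2 != [::] by case: l1 {IH}.
by rewrite !cat_cons !bigconn_cons //; apply: HR.
Qed.

Lemma ac_bigconn_cat b l1 l2 : l1 != [::] -> l2 != [::] ->
  ac (bigconn b (l1 ++ l2)) (conn b (bigconn b l1) (bigconn b l2)).
Proof.
elim: l1 => // x [|y l1] IH _ Hl2; first by rewrite cat1s bigconn_cons //; exact: ac_refl.
rewrite cat_cons !(bigconn_cons b x) //.
exact: ac_trans (ac_connR _ _ (IH isT Hl2)) (ac_connA _ _ _ _).
Qed.

Lemma ac_bigconn_move b x l1 l2 :
  ac (bigconn b (x :: l1 ++ l2)) (bigconn b (l1 ++ x :: l2)).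
Proof.
elim: l1 => [|y l1 IH]; first exact: ac_refl.
have Hne : l1 ++ x :: l2 != [::] by case: l1 {IH}.
rewrite !cat_cons (bigconn_cons _ _ Hne) bigconn_cons //.
case E: (l1 ++ l2) IH => [|z l] IH.
  by case: l1 E {Hne IH} => // /= ->; exact: ac_connC.
have Hne' : l1 ++ l2 != [::] by rewrite E.
rewrite -E in IH *; rewrite (bigconn_cons _ _ Hne').
apply: ac_trans (ac_connCA _ _ _ _) (ac_connR _ _ _).
by rewrite -bigconn_cons.
Qed.

Lemma ac_bigconn_perm b l l' : perm_eq l l' -> ac (bigconn b l) (bigconn b l').
Proof.
elim: l l' => [|x l IH] l'; first by rewrite perm_sym => /perm_nilP ->; exact: ac_refl.
move=> Hp; have Hx : x \in l' by rewrite -(perm_mem Hp) mem_head.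
move: Hp; case/splitPr: Hx => l1 l2 Hp.
have {}Hp : perm_eq l (l1 ++ l2).
  by rewrite -(perm_cons x); apply: perm_trans Hp _; rewrite -cat1s perm_catCA.
apply: ac_trans (ac_bigconn_move _ _ _ _).
case: l IH Hp => [|y l] IH Hp.
  by move: Hp; rewrite perm_sym => /perm_nilP ->; exact: ac_refl.
have Hne : l1 ++ l2 != [::] by case: (l1 ++ l2) Hp => // /perm_nilP.
by rewrite (bigconn_cons _ _ Hne) bigconn_cons //; apply/ac_connR/IH.
Qed.

Lemma ac_bigconn_map b (f g : formula -> formula) l :
  {in l, forall x, ac (f x) (g x)} -> ac (bigconn b (map f l)) (bigconn b (map g l)).
Proof.
elim: l => [|x [|y l] IH] H /=; first exact: ac_refl.
  by apply: H; rewrite mem_head.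
apply: ac_conn; first by apply: H; rewrite mem_head.
by apply: IH => z Hz; apply: H; rewrite inE Hz orbT.
Qed.

Lemma spine_neq0 b f : spine b f != [::].
Proof. by case: f => //= *; case: b. Qed.

Lemma bigconn_spine b f : bigconn b (spine b f) = f.
Proof.
elim: f => // x _ y IH; case: b IH => IH; rewrite [spine _ _]/= //;
  by rewrite bigconn_cons ?spine_neq0 // IH.
Qed.

Lemma juncts_neq0 b f : juncts b f != [::].
Proof. by elim: f => //= x Hx y _; case: b Hx => //; case: (juncts _ x). Qed.

Lemma ac_bigconn_juncts b f : ac f (bigconn b (juncts b f)).
Proof.
elim: f => /=; try by move=> *; exact: ac_refl.
- move=> x Hx y Hy; case: b Hx Hy => Hx Hy; last exact: ac_refl.
  apply: ac_sym; apply: ac_trans (ac_bigconn_cat _ (juncts_neq0 _ _) (juncts_neq0 _ _)) _.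
  exact: ac_sym (ac_conn true Hx Hy).
- move=> x Hx y Hy; case: b Hx Hy => Hx Hy; first exact: ac_refl.
  apply: ac_sym; apply: ac_trans (ac_bigconn_cat _ (juncts_neq0 _ _) (juncts_neq0 _ _)) _.
  exact: ac_sym (ac_conn false Hx Hy).
Qed.

Lemma flatten_vars_juncts b f : flatten (map vars (juncts b f)) = vars f.
Proof.
elim: f => //= x Hx y Hy; case: b Hx Hy => Hx Hy /=;
  by rewrite ?cats0 // map_cat flatten_cat Hx Hy.
Qed.

Lemma all_constant_free_juncts b f : all constant_free (juncts b f) = constant_free f.
Proof.
elim: f => //= x Hx y Hy; case: b Hx Hy => Hx Hy /=; by rewrite ?andbT // all_cat Hx Hy.
Qed.

Lemma all_negation_free_juncts b f : all negation_free (juncts b f) = negation_free f.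
Proof.
elim: f => //= x Hx y Hy; case: b Hx Hy => Hx Hy /=; by rewrite ?andbT // all_cat Hx Hy.
Qed.

Lemma is_conn_juncts b f x : x \in juncts b f -> is_conn b x = false.
Proof.
elim: f => [||y|y|y Hy z Hz|y Hy z Hz] /=; try by rewrite inE => /eqP ->.
- case: b Hy Hz => Hy Hz; rewrite ?mem_cat ?inE; last by move/eqP ->.
  by case/orP; [apply: Hy|apply: Hz].
- case: b Hy Hz => Hy Hz; rewrite ?mem_cat ?inE; first by move/eqP ->.
  by case/orP; [apply: Hy|apply: Hz].
Qed.

Lemma size_juncts b f : is_conn b f -> 1 < size (juncts b f).
Proof.
have Hcat (l1 l2 : seq formula) : l1 != [::] -> l2 != [::] -> 1 < size (l1 ++ l2).
  by case: l1 => // ? ? _; case: l2 => // ? ? _; rewrite size_cat /= addnS.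
by case: f => //= x y; case: b => // _; apply: Hcat; apply: juncts_neq0.
Qed.

Lemma SM_vars l r : SM l r -> perm_eq (vars l) (vars r).
Proof. by case=> [[-> ->]|[-> ->]]. Qed.

Lemma SM_valid l r : SM l r -> valid l r.
Proof.
case=> [[-> ->]|[-> ->]] v /=.
- by case: (v 0); case: (v 1); case: (v 2).
- by case: (v 0); case: (v 1); case: (v 2); case: (v 3).
Qed.

Lemma perm_vars_subst s l r : perm_eq (vars l) (vars r) ->
  perm_eq (vars (subst s l)) (vars (subst s r)).
Proof. by move=> H; rewrite !vars_subst; apply/perm_flatten/perm_map. Qed.

Section Steps.

Variable S : infset.
Hypothesis S_vars : forall l r, S l r -> perm_eq (vars l) (vars r).
Hypothesis S_valid : forall l r, S l r -> valid l r.

Lemma rstep_valid a b : rstep S a b -> valid a b.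
Proof.
elim=> {a b} /= [l r s Hs _ _|a a' c _ H|a c c' _ H|a a' c _ H|a c c' _ H] v /=.
- by rewrite !eval_subst; apply: S_valid.
- by case/andP => /H -> ->.
- by case/andP => -> /H ->.
- by case/orP => [/H ->|->]; rewrite ?orbT.
- by case/orP => [->|/H ->]; rewrite ?orbT.
Qed.

Lemma rsq_valid a b : rsq S a b -> valid a b.
Proof.
case=> [a' [b' [H1 [H2 H3]]]].
exact: valid_ac (ac_sym H1) H3 (rstep_valid H2).
Qed.

Lemma rstep_ren r a b : rstep S a b -> {in vars a &, injective r} ->
  rstep S (ren r a) (ren r b).
Proof.
have sub_inj (s1 s2 : seq nat) : {subset s2 <= s1} ->
    {in s1 &, injective r} -> {in s2 &, injective r}.
  by move=> Hs H x y Hx Hy; apply: H; apply: Hs.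
elim=> {a b} /= [l r0 s Hs Hl Hr|a a' c _ IH|a c c' _ IH|a a' c _ IH|a c c' _ IH] Hinj.
- rewrite !ren_subst; apply: rs_base => //; rewrite -ren_subst /linear vars_ren.
    by rewrite map_inj_in_uniq.
  rewrite map_inj_in_uniq //; apply: sub_inj Hinj => x.
  by rewrite (perm_mem (perm_vars_subst s (S_vars Hs))).
- by apply/rs_andL/IH; apply: sub_inj Hinj => x Hx; rewrite mem_cat Hx.
- by apply/rs_andR/IH; apply: sub_inj Hinj => x Hx; rewrite mem_cat Hx orbT.
- by apply/rs_orL/IH; apply: sub_inj Hinj => x Hx; rewrite mem_cat Hx.
- by apply/rs_orR/IH; apply: sub_inj Hinj => x Hx; rewrite mem_cat Hx orbT.
Qed.

Lemma rsq_ren r a b : rsq S a b -> {in vars a &, injective r} ->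
  rsq S (ren r a) (ren r b).
Proof.
case=> [a' [b' [H1 [H2 H3]]]] Hinj.
exists (ren r a'), (ren r b'); split; first exact: ac_ren.
split; last exact: ac_ren.
apply: rstep_ren => // x y; rewrite -!(perm_mem (ac_vars H1)); exact: Hinj.
Qed.

Lemma ac_rsq a a' b : ac a a' -> rsq S a' b -> rsq S a b.
Proof. by move=> H [c1 [c2 [H1 H23]]]; exists c1, c2; split=> //; exact: ac_trans H H1. Qed.

Lemma rstep_bigconn_context b l1 l2 c c' : rstep S c c' ->
  rstep S (bigconn b (l1 ++ c :: l2)) (bigconn b (l1 ++ c' :: l2)).
Proof.
apply: bigconn_context => x y z; case: b => /=;
  [exact: rs_andL|exact: rs_orL|exact: rs_andR|exact: rs_orR].
Qed.

Lemma rsq_bigconn_context b l1 l2 c c' : rsq S c c' ->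
  rsq S (bigconn b (l1 ++ c :: l2)) (bigconn b (l1 ++ c' :: l2)).
Proof.
case=> [c1 [c2 [H1 [H2 H3]]]].
have ac_context d d' : ac d d' -> ac (bigconn b (l1 ++ d :: l2)) (bigconn b (l1 ++ d' :: l2)).
  by apply: bigconn_context => *; [exact: ac_connL|exact: ac_connR].
exists (bigconn b (l1 ++ c1 :: l2)), (bigconn b (l1 ++ c2 :: l2)).
by split; [|split]; [exact: ac_context|exact: rstep_bigconn_context|exact: ac_context].
Qed.

End Steps.

(** * Enumerating the steps *)

Fixpoint picks {T : Type} (l : seq T) : seq (T * seq T) :=
  if l is x :: l' then (x, l') :: [seq (p.1, x :: p.2) | p <- picks l'] else [::].

Fixpoint splits {T : Type} (l : seq T) : seq (seq T * seq T) :=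
  if l is x :: l' then
    [seq (x :: p.1, p.2) | p <- splits l'] ++ [seq (p.1, x :: p.2) | p <- splits l']
  else [:: ([::], [::])].

(* The switch instances at the root:  X /\ (Y \/ Z) /\ R  ~>  ((X /\ Y) \/ Z) /\ R. *)
Definition switch_root (f : formula) : seq formula :=
  flatten [seq
    (if p.1 is FOr _ _ then
       flatten [seq
         (if nilp q.1 then [::] else
          [seq bigconn true (rcons q.2 (FOr (FAnd (bigconn true q.1) (bigconn false yz.1))
                                            (bigconn false yz.2)))
            | yz <- splits (spine false p.1) & ~~ nilp yz.1 && ~~ nilp yz.2])
         | q <- splits p.2]
     else [::])
    | p <- picks (spine true f)].

(* The medial instances at the root:  (W /\ X) \/ (Y /\ Z) \/ R  ~>  ((W \/ Y) /\ (X \/ Z)) \/ R. *)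
Definition medial_root (f : formula) : seq formula :=
  flatten [seq
    (if p.1 is FAnd _ _ then
       flatten [seq
         (if q.1 is FAnd _ _ then
            flatten [seq
              [seq bigconn false (rcons q.2 (FAnd (FOr (bigconn true wx.1) (bigconn true yz.1))
                                                  (FOr (bigconn true wx.2) (bigconn true yz.2))))
                | yz <- splits (spine true q.1) & ~~ nilp yz.1 && ~~ nilp yz.2]
              | wx <- splits (spine true p.1) & ~~ nilp wx.1 && ~~ nilp wx.2]
          else [::])
         | q <- picks p.2]
     else [::])
    | p <- picks (spine false f)].

Definition inner_steps (steps : formula -> seq formula) (b : bool) (f : formula) :=
  let l := spine b f in
  flatten [seq [seq bigconn b (take i l ++ g :: drop i.+1 l) | g <- steps (nth FTop l i)]
            | i <- iota 0 (size l)].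

Fixpoint steps (k : nat) (f : formula) : seq formula :=
  if k is k'.+1 then
    match f with
    | FAnd _ _ => switch_root f ++ inner_steps (steps k') true f
    | FOr _ _ => medial_root f ++ inner_steps (steps k') false f
    | _ => [::]
    end
  else [::].

Arguments inner_steps : simpl never.
Arguments switch_root : simpl never.
Arguments medial_root : simpl never.

Lemma picks_perm (T : eqType) (l : seq T) p : p \in picks l -> perm_eq l (p.1 :: p.2).
Proof.
elim: l p => // x l IH p; rewrite inE => /orP [/eqP -> //|/mapP [q /IH Hq ->] /=].
rewrite -(perm_cons x) in Hq; apply: perm_trans Hq _.
by apply/permP => a /=; rewrite addnCA.
Qed.

Lemma splits_perm (T : eqType) (l : seq T) p : p \in splits l -> perm_eq l (p.1 ++ p.2).
Proof.
elim: l p => [|x l IH] p /=; first by rewrite inE => /eqP ->.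
rewrite mem_cat => /orP [] /mapP [q /IH Hq ->] /=; first by rewrite perm_cons.
by rewrite -(perm_cons x) in Hq; apply: perm_trans Hq _; rewrite -cat1s perm_catCA.
Qed.

Lemma splits_filter (T : eqType) (a : pred T) l :
  (filter a l, filter (predC a) l) \in splits l.
Proof.
elim: l => [|x l IH] /=; first by rewrite inE.
rewrite mem_cat; case: (a x) => /=.
- by rewrite (map_f (fun p => (x :: p.1, p.2)) IH).
- by rewrite (map_f (fun p => (p.1, x :: p.2)) IH) orbT.
Qed.

Lemma linear_bigconn_mem b l x : linear (bigconn b l) -> x \in l -> linear x.
Proof.
move=> + Hx; have Hne : l != [::] by case: l Hx.
rewrite /linear vars_bigconn //; elim: l Hx {Hne} => // y l IH.
rewrite inE /= cat_uniq => /orP [/eqP ->|/IH Hl] /and3P [Hy _ Hr] //; exact: Hl.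
Qed.

Lemma rsq_root_step b f R w l r s : linear f -> ac f (bigconn b (w :: R)) -> SM l r ->
  w = subst s l -> rsq SM f (bigconn b (rcons R (subst s r))).
Proof.
move=> Hf Hac HS Hw.
have {}Hac : ac f (bigconn b (R ++ [:: w])).
  by apply: ac_trans Hac (ac_bigconn_perm _ _); rewrite perm_sym cats1 perm_rcons.
have Hlw : linear w.
  apply: (@linear_bigconn_mem b (R ++ [:: w])); first by rewrite -(ac_linear Hac).
  by rewrite mem_cat mem_head orbT.
exists (bigconn b (R ++ [:: w])), (bigconn b (R ++ [:: subst s r])).
split=> //; split; last by rewrite cats1; exact: ac_refl.
apply: rstep_bigconn_context; rewrite Hw; apply: rs_base; rewrite -?Hw //.
by rewrite /linear -(perm_uniq (perm_vars_subst s (SM_vars HS))) -Hw.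
Qed.

Lemma ac_bigconn_head b x x' R : ac x x' -> ac (bigconn b (x :: R)) (bigconn b (x' :: R)).
Proof.
by apply: (@bigconn_context ac b [::]) => *; [exact: ac_connL|exact: ac_connR].
Qed.

Lemma ac_bigconn_group b d X R : X != [::] ->
  ac (bigconn b (d :: X ++ R)) (bigconn b (conn b (bigconn b X) d :: R)).
Proof.
move=> HX.
have Hp : perm_eq (d :: X ++ R) ((X ++ [:: d]) ++ R) by rewrite -catA perm_sym perm_catCA.
apply: ac_trans (ac_bigconn_perm b Hp) _.
have HXd : ac (bigconn b (X ++ [:: d])) (conn b (bigconn b X) d) by exact: ac_bigconn_cat.
case: R {Hp} => [|y R]; first by rewrite cats0.
apply: ac_trans (ac_bigconn_cat _ _ _) _ => //; first by case: X HX {HXd}.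
by rewrite (bigconn_cons _ _ (isT : y :: R != [::])); exact: ac_connL.
Qed.

Lemma ac_bigconn_pair b A B R : ac (bigconn b (A :: B :: R)) (bigconn b (conn b A B :: R)).
Proof.
case: R => [|y R]; first exact: ac_refl.
rewrite (bigconn_cons _ A (isT : B :: y :: R != [::])).
rewrite (bigconn_cons _ B (isT : y :: R != [::])) (bigconn_cons _ _ (isT : y :: R != [::])).
exact: ac_connA.
Qed.

Lemma ac_spine_split b f Y Z : perm_eq (spine b f) (Y ++ Z) -> Y != [::] -> Z != [::] ->
  ac f (conn b (bigconn b Y) (bigconn b Z)).
Proof.
move=> Hp HY HZ; rewrite -{1}(bigconn_spine b f).
exact: ac_trans (ac_bigconn_perm b Hp) (ac_bigconn_cat _ HY HZ).
Qed.

Lemma switch_root_sound f g : linear f -> g \in switch_root f -> rsq SM f g.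
Proof.
move=> Hf /flatten_mapP [p /picks_perm Hp].
case ED: p.1 => [||?|?|? ?|y z] //; rewrite -ED.
move=> /flatten_mapP [q /splits_perm Hq]; case: nilP => // /eqP HX.
case/mapP => yz; rewrite mem_filter => /andP [/andP [/nilP/eqP HY /nilP/eqP HZ] Hyz] ->.
pose s i := nth FTop [:: bigconn true q.1; bigconn false yz.1; bigconn false yz.2] i.
apply: (@rsq_root_step true f q.2 (FAnd (bigconn true q.1)
          (FOr (bigconn false yz.1) (bigconn false yz.2))) switch_l switch_r s) => //; last by left.
have Hspine : perm_eq (spine true f) (p.1 :: q.1 ++ q.2).
  by apply: perm_trans Hp _; rewrite perm_cons.
rewrite -{1}(bigconn_spine true f).
apply: ac_trans (ac_bigconn_perm true Hspine) _.
apply: ac_trans (ac_bigconn_group _ _ _ HX) _.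
apply/ac_bigconn_head/ac_connR.
exact: ac_spine_split (splits_perm Hyz) HY HZ.
Qed.

Lemma medial_root_sound f g : linear f -> g \in medial_root f -> rsq SM f g.
Proof.
move=> Hf /flatten_mapP [p /picks_perm Hp].
case EA: p.1 => [||?|?|? ?|? ?] //; rewrite -EA.
move=> /flatten_mapP [q /picks_perm Hq].
case EB: q.1 => [||?|?|? ?|? ?] //; rewrite -EB.
move=> /flatten_mapP [wx]; rewrite mem_filter => /andP [/andP [/nilP/eqP HW /nilP/eqP HX] Hwx].
case/mapP => yz; rewrite mem_filter => /andP [/andP [/nilP/eqP HY /nilP/eqP HZ] Hyz] ->.
pose s i := nth FTop
  [:: bigconn true wx.2; bigconn true yz.1; bigconn true yz.2; bigconn true wx.1] i.
apply: (@rsq_root_step false f q.2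
          (FOr (FAnd (bigconn true wx.1) (bigconn true wx.2))
               (FAnd (bigconn true yz.1) (bigconn true yz.2)))
          medial_l medial_r s) => //; last by right.
have Hspine : perm_eq (spine false f) (p.1 :: q.1 :: q.2).
  by apply: perm_trans Hp _; rewrite perm_cons.
rewrite -{1}(bigconn_spine false f).
apply: ac_trans (ac_bigconn_perm false Hspine) _.
apply: ac_trans (ac_bigconn_pair _ _ _ _) _.
apply/ac_bigconn_head/ac_conn.
- exact: ac_spine_split (splits_perm Hwx) HW HX.
- exact: ac_spine_split (splits_perm Hyz) HY HZ.
Qed.

Lemma inner_steps_sound (next : formula -> seq formula) b f g :
  (forall h g, linear h -> g \in next h -> rsq SM h g) ->
  linear f -> g \in inner_steps next b f -> rsq SM f g.
Proof.
move=> Hnext Hf /flatten_mapP [i]; rewrite mem_iota add0n => /andP [_ Hi] /mapP [g0 Hg0 ->].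
have E : spine b f = take i (spine b f) ++ nth FTop (spine b f) i :: drop i.+1 (spine b f).
  by rewrite -drop_nth // cat_take_drop.
rewrite -{1}(bigconn_spine b f) {1}E; apply/rsq_bigconn_context/(Hnext _ _ _ Hg0).
by apply: (@linear_bigconn_mem b (spine b f)); rewrite ?bigconn_spine ?mem_nth.
Qed.

Lemma steps_sound k f g : linear f -> g \in steps k f -> rsq SM f g.
Proof.
elim: k f g => // k IH [||x|x|x y|x y] g Hf //=; rewrite mem_cat => /orP [].
- exact: switch_root_sound.
- exact: inner_steps_sound.
- exact: medial_root_sound.
- exact: inner_steps_sound.
Qed.

(** * Enumerating formulae *)

Fixpoint fsize (f : formula) : nat :=
  match f with FAnd a b | FOr a b => (fsize a + fsize b).+1 | _ => 1 end.

Fixpoint junct_sort (le : rel formula) (k : nat) (f : formula) : formula :=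
  if k is k'.+1 then
    match f with
    | FAnd _ _ => bigconn true (sort le (map (junct_sort le k') (juncts true f)))
    | FOr _ _ => bigconn false (sort le (map (junct_sort le k') (juncts false f)))
    | _ => f
    end
  else f.

Fixpoint shape_code (f : formula) : seq nat :=
  match f with
  | FAnd a b => 1 :: shape_code a ++ shape_code b
  | FOr a b => 2 :: shape_code a ++ shape_code b
  | _ => [:: 0]
  end.

Fixpoint lex_leq (s t : seq nat) : bool :=
  match s, t with
  | [::], _ => true
  | _ :: _, [::] => false
  | x :: s', y :: t' => (x < y) || (x == y) && lex_leq s' t'
  end.

Definition normalize (f : formula) : formula :=
  junct_sort (fun a b => lex_leq (shape_code a) (shape_code b)) (fsize f) f.

Definition relabel (f : formula) : formula := ren (index^~ (vars f)) f.

Fixpoint formula_le (a b : formula) : bool :=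
  match a, b with
  | FVar x, FVar y => x <= y
  | FVar _, _ => true
  | _, FVar _ => false
  | FAnd a1 a2, FAnd b1 b2 | FOr a1 a2, FOr b1 b2 =>
      if formula_eqb a1 b1 then formula_le a2 b2 else formula_le a1 b1
  | FAnd _ _, _ => true
  | _, FAnd _ _ => false
  | _, _ => true
  end.

Fixpoint dedup_adjacent (l : seq formula) : seq formula :=
  match l with
  | x :: (y :: _) as l' => if formula_eqb x y then dedup_adjacent l' else x :: dedup_adjacent l'
  | _ => l
  end.

(* All constant-free negation-free formulae on the variables lo, ..., lo + n - 1, in this order. *)
Fixpoint trees (k n lo : nat) : seq formula :=
  if k is k'.+1 then
    if n == 1 then [:: FVar lo] else
    flatten [seq flatten [seq [seq conn b l r | l <- trees k' i lo, r <- trees k' (n - i) (lo + i)]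
                           | b <- [:: true; false]]
              | i <- iota 1 n.-1]
  else [::].

(* Every premise on 0, ..., n-1 is a renaming of an AC-variant of one of these; sorting
   juncts by shape before relabeling only serves to make this list short. *)
Definition premise_reps (n : nat) : seq formula :=
  dedup_adjacent (sort formula_le (map (relabel \o normalize) (trees n n 0))).

(* Up to AC, a formula on x :: S' is [conn b l r] where [l] is the b-junct containing x. *)
Fixpoint candidates (k : nat) (S : seq nat) : seq formula :=
  if k is k'.+1 then
    match S with
    | [::] => [::]
    | [:: x] => [:: FVar x]
    | x :: S' =>
      flatten [seq
        (if p.2 is [::] then [::] else
         flatten [seq [seq conn b l r | l <- [seq l <- candidates k' (x :: p.1) | ~~ is_conn b l],
                                        r <- candidates k' p.2]
                   | b <- [:: true; false]])
        | p <- splits S']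
    end
  else [::].

Lemma ac_junct_sort le k f : ac f (junct_sort le k f).
Proof.
elim: k f => [|k IH] f /=; first exact: ac_refl.
have Hb b : ac f (bigconn b (sort le [seq junct_sort le k i | i <- juncts b f])).
  apply: ac_trans (ac_bigconn_juncts b f) _.
  apply: ac_trans (ac_bigconn_perm b _); last by rewrite perm_sym perm_sort.
  by rewrite -{1}(map_id (juncts b f)); apply: ac_bigconn_map => x _; exact: IH.
by case: f Hb => *; auto; exact: ac_refl.
Qed.

Lemma normalize_ac f : ac f (normalize f).
Proof. exact: ac_junct_sort. Qed.

Lemma mem_dedup_adjacent x l : x \in l -> x \in dedup_adjacent l.
Proof.
elim: l => // y [|z l] IH // Hx; rewrite [dedup_adjacent _]/=.
case: formula_eqbP => [Eyz|_].
- by apply: IH; move: Hx; rewrite inE Eyz => /orP [/eqP ->|]; rewrite ?mem_head.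
- move: Hx; rewrite inE => /orP [/eqP ->|Hx]; first by rewrite mem_head.
  by rewrite inE IH ?orbT.
Qed.

Lemma trees_conn_complete b a c
  (IHa : forall k n lo, constant_free a -> negation_free a ->
           vars a = iota lo n -> n <= k -> a \in trees k n lo)
  (IHc : forall k n lo, constant_free c -> negation_free c ->
           vars c = iota lo n -> n <= k -> c \in trees k n lo) k n lo :
  constant_free (conn b a c) -> negation_free (conn b a c) ->
  vars (conn b a c) = iota lo n -> n <= k -> conn b a c \in trees k n lo.
Proof.
rewrite constant_free_conn negation_free_conn vars_conn.
move=> /andP [Ca Cc] /andP [Na Nc] Hv Hn.
set i := size (vars a); set j := size (vars c).
have Hi : 0 < i by rewrite lt0n size_eq0 constant_free_vars.
have Hj : 0 < j by rewrite lt0n size_eq0 constant_free_vars.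
have Enij : n = i + j by rewrite -(size_iota lo n) -Hv size_cat.
case: k Hn => [|k] Hn; first by lia.
subst n; move: Hv; rewrite iotaD => /eqP; rewrite eqseq_cat ?size_iota // => /andP [/eqP Ha /eqP Hc].
rewrite -[trees k.+1 _ _]/(if _ == 1 then _ else _) -/trees ifN_eq; last by apply/eqP; lia.
apply/flatten_mapP; exists i; first by rewrite mem_iota; lia.
apply/flatten_mapP; exists b; first by case: b.
rewrite (_ : i + j - i = j); last by lia.
by apply: (@allpairs_f _ _ _ (conn b)); [apply: IHa|apply: IHc] => //; lia.
Qed.

Lemma trees_complete f k n lo : constant_free f -> negation_free f ->
  vars f = iota lo n -> n <= k -> f \in trees k n lo.
Proof.
elim: f k n lo => // [x|a IHa c IHc|a IHa c IHc] k n lo.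
- move=> _ _ Hv; have En : n = 1 by rewrite -(size_iota lo n) -Hv.
  by case: k => [|k]; rewrite En // => _; move: Hv; rewrite En /= => -[->]; rewrite inE.
- exact: (@trees_conn_complete true a c IHa IHc k n lo).
- exact: (@trees_conn_complete false a c IHa IHc k n lo).
Qed.

Lemma var_or_conn f : constant_free f -> negation_free f ->
  (exists x, f = FVar x) \/ (exists2 b, is_conn b f & 1 < size (vars f)).
Proof.
case: f => //= [x _ _|a c /andP [Ca Cc] _|a c /andP [Ca Cc] _];
  [by left; exists x|right; exists true|right; exists false] => //; rewrite size_cat.
all: case: (vars a) (constant_free_vars Ca) => // ? ? _.
all: by case: (vars c) (constant_free_vars Cc) => // ? ? _; rewrite /= addnS.
Qed.

Lemma perm_filter_cat (s A B : seq nat) : uniq (A ++ B) -> perm_eq s (A ++ B) ->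
  perm_eq A [seq z <- s | z \in A] /\ perm_eq B [seq z <- s | z \notin A].
Proof.
rewrite cat_uniq => /and3P [_ HAB _] Hs.
have HB : {in B, forall z, z \notin A}.
  by move=> z Hz; apply/negP => HzA; case/negP: HAB; apply/hasP; exists z.
split.
- rewrite perm_sym; apply: perm_trans (perm_filter _ Hs) _; rewrite filter_cat.
  have -> : [seq z <- B | z \in A] = [::].
    by apply/eqP; rewrite -[_ == _]negbK -has_filter; apply/hasPn.
  by rewrite cats0 (all_filterP _) //; apply/allP.
- rewrite perm_sym; apply: perm_trans (perm_filter _ Hs) _; rewrite filter_cat.
  have -> : [seq z <- A | z \notin A] = [::].
    by apply/eqP; rewrite -[_ == _]negbK -has_filter; apply/hasPn => z ->.
  by rewrite (all_filterP _) //; apply/allP.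
Qed.

Lemma ac_pick_junct b f x : is_conn b f -> constant_free f -> negation_free f ->
  x \in vars f ->
  exists c R, [/\ x \in vars c, ~~ is_conn b c, R != [::],
    [&& constant_free c, negation_free c, constant_free (bigconn b R)
      & negation_free (bigconn b R)] & ac f (conn b c (bigconn b R))].
Proof.
move=> Hb Cf Nf; rewrite -(flatten_vars_juncts b f) => /flatten_mapP [c Hc Hxc].
have HR : rem c (juncts b f) != [::].
  by move: (size_juncts Hb); rewrite -size_eq0 size_rem //; case: size => [|[]].
exists c, (rem c (juncts b f)); split=> //; first by rewrite (is_conn_juncts Hc).
  rewrite constant_free_bigconn // negation_free_bigconn //.
  rewrite -(all_constant_free_juncts b) -(all_negation_free_juncts b) in Cf Nf.
  rewrite (allP Cf c Hc) (allP Nf c Hc) /=.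
  by apply/andP; split; apply/allP => z /mem_rem; [apply: (allP Cf)|apply: (allP Nf)].
apply: ac_trans (ac_bigconn_juncts b f) _.
apply: ac_trans (ac_bigconn_perm b (perm_to_rem Hc)) _.
by rewrite bigconn_cons //; exact: ac_refl.
Qed.

Lemma candidates_nil k : candidates k [::] = [::].
Proof. by case: k. Qed.

Lemma mem_candidates_conn k b (a : pred nat) x S g1 g2 : ~~ is_conn b g1 ->
  g1 \in candidates k (x :: filter a S) -> g2 \in candidates k (filter (predC a) S) ->
  conn b g1 g2 \in candidates k.+1 (x :: S).
Proof.
move=> Hb; case: S => [|y S] Hg1; first by rewrite /= candidates_nil.
rewrite -[candidates k.+1 _]/(flatten _) -/candidates => Hg2.
apply/flatten_mapP; exists (filter a (y :: S), filter (predC a) (y :: S)).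
  exact: splits_filter.
move: Hg2; case: (filter (predC a) _) => [|z q]; first by rewrite candidates_nil.
move=> Hg2; apply/flatten_mapP; exists b; first by case: b Hb.
by apply: (@allpairs_f _ _ _ (conn b)); rewrite // mem_filter Hb.
Qed.

Lemma candidates_complete k S f : uniq S -> perm_eq (vars f) S -> size S <= k ->
  constant_free f -> negation_free f -> exists2 g, g \in candidates k S & ac f g.
Proof.
elim: k S f => [|k IH] S f HS Hp Hk Cf Nf.
  by move: Hk (constant_free_vars Cf); rewrite leqn0 -(perm_size Hp) size_eq0 => /eqP ->.
case: (var_or_conn Cf Nf) => [[y Ey]|[b Hb Hsz]].
  rewrite Ey in Hp *; have := perm_size Hp.
  case: S HS Hp {Hk} => [|z [|]] //= _ Hp _.
  have : z \in [:: y] by rewrite (perm_mem Hp) mem_head.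
  by rewrite inE => /eqP ->; exists (FVar y); [exact: mem_head|exact: ac_refl].
case: S HS Hp Hk => [|x S] HS Hp Hk; first by rewrite (perm_size Hp) in Hsz.
have Hx : x \in vars f by rewrite (perm_mem Hp) mem_head.
have [c [R [Hxc Hc HR /and4P [Cc Nc CR NR] Hac]]] := ac_pick_junct Hb Cf Nf Hx.
set A := vars c; set B := vars (bigconn b R).
have HAB : perm_eq (x :: S) (A ++ B).
  by rewrite -(vars_conn b); apply: perm_trans (ac_vars Hac); rewrite perm_sym.
have HuAB : uniq (A ++ B) by rewrite -(perm_uniq HAB).
have [HuA HuB] : uniq A /\ uniq B by move: HuAB; rewrite cat_uniq => /and3P [].
have [HA HB] := perm_filter_cat HuAB HAB; rewrite /= Hxc /= in HA HB.
have HsAB : size A + size B = (size S).+1 by rewrite -size_cat -(perm_size HAB).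
have HsA : 0 < size A by rewrite /A; case: (vars c) Hxc.
have HsB : 0 < size B by rewrite lt0n size_eq0 constant_free_vars.
have [g1 Hg1 Hac1] : exists2 g1, g1 \in candidates k (x :: [seq z <- S | z \in A]) & ac c g1.
  apply: IH => //; first by rewrite -(perm_uniq HA).
  by rewrite -(perm_size HA) -ltnS (leq_trans _ Hk) //= -HsAB -addn1 leq_add2l.
have [g2 Hg2 Hac2] : exists2 g2, g2 \in candidates k [seq z <- S | z \notin A]
                                   & ac (bigconn b R) g2.
  apply: IH => //; first by rewrite -(perm_uniq HB).
  by rewrite -(perm_size HB) -ltnS (leq_trans _ Hk) //= -HsAB -add1n leq_add2r.
exists (conn b g1 g2); last exact: ac_trans Hac (ac_conn _ Hac1 Hac2).
apply: (@mem_candidates_conn k b (mem A) x S g1 g2 _ Hg1 Hg2).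
by rewrite -(ac_is_conn b Hac1).
Qed.

(** * The decision procedure *)

Definition strict_step (phi phi' : formula) : Prop :=
  [/\ rsq SM phi phi', perm_eq (vars phi') (vars phi), constant_free phi',
      negation_free phi' & exists v, eval v phi' && ~~ eval v phi].

Definition advance (phi psi : formula) : Prop :=
  ac phi psi \/ exists2 phi', strict_step phi phi' & valid phi' psi.

(* [all] and [has] evaluate their whole list under [vm_compute]; these stop early. *)
Fixpoint lazy_all {T} (p : T -> bool) (s : seq T) : bool :=
  if s is x :: s' then (if p x then lazy_all p s' else false) else true.

Fixpoint lazy_has {T} (p : T -> bool) (s : seq T) : bool :=
  if s is x :: s' then (if p x then true else lazy_has p s') else false.

Fixpoint minterms (f : formula) : seq (seq nat) :=
  match f with
  | FTop => [:: [::]]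
  | FVar x => [:: [:: x]]
  | FAnd a b => flatten [seq [seq p ++ q | q <- minterms b] | p <- minterms a]
  | FOr a b => minterms a ++ minterms b
  | _ => [::]
  end.

Definition bits_of (n : nat) (m : seq nat) : seq bool := mkseq (fun x => x \in m) n.

Definition eval_bits (a : seq bool) (f : formula) : bool := eval (nth false a) f.

Definition strictly_weaker (n : nat) (u g : formula) : bool :=
  [&& perm_eq (vars g) (iota 0 n), constant_free g, negation_free g &
      lazy_has (fun a => ~~ eval_bits a u) (map (bits_of n) (minterms g))].

(* For negation-free formulae, [a -> b] is valid iff every minterm of [a] satisfies [b]; this
   decides validity of [u -> t] (via [Mu]), its non-triviality at each x (via [Mx]) and the
   validity of [g -> t] for the steps [g] of [u] listed in [G]. *)
Definition check_premise (n : nat) (C : seq formula) (u : formula) : bool :=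
  let Mu := map (bits_of n) (minterms u) in
  let Mx := [seq map (bits_of n) (minterms (subst1 x FTop u)) | x <- iota 0 n] in
  let G := [seq (g, map (bits_of n) (minterms g)) | g <- steps (fsize u) u & strictly_weaker n u g] in
  lazy_all (fun t =>
    if lazy_all (eval_bits^~ t) Mu then
      if lazy_all (fun x => lazy_has (fun a => ~~ eval_bits a (subst1 x FBot t)) (nth [::] Mx x))
                  (iota 0 n)
      then formula_eqb t u || lazy_has (fun p => lazy_all (eval_bits^~ t) p.2) G
      else true
    else true) C.

Definition check_size (n : nat) : bool :=
  let C := candidates n (iota 0 n) in lazy_all (check_premise n C) (premise_reps n).

Lemma lazy_allE T (p : T -> bool) s : lazy_all p s = all p s.
Proof. by elim: s => //= x s ->; case: (p x). Qed.

Lemma lazy_hasE T (p : T -> bool) s : lazy_has p s = has p s.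
Proof. by elim: s => //= x s ->; case: (p x). Qed.

Lemma eval_minterms v f : negation_free f -> eval v f = has (all v) (minterms f).
Proof.
elim: f => //= [x _|a IHa b IHb /andP [Na Nb]|a IHa b IHb /andP [Na Nb]].
- by rewrite andbT orbF.
- rewrite IHa // IHb //; apply/andP/hasP.
  + case=> /hasP [p Hp Hvp] /hasP [q Hq Hvq]; exists (p ++ q); last by rewrite all_cat Hvp.
    by apply/flatten_mapP; exists p => //; apply: map_f.
  + case=> m /flatten_mapP [p Hp /mapP [q Hq ->]]; rewrite all_cat => /andP [H1 H2].
    by split; apply/hasP; [exists p|exists q].
- by rewrite has_cat IHa // IHb.
Qed.

Lemma valid_minterms a b : negation_free a -> negation_free b ->
  valid a b <-> {in minterms a, forall m, eval (fun x => x \in m) b}.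
Proof.
move=> Na Nb; split=> [H m Hm|H v].
- by apply: H; rewrite eval_minterms //; apply/hasP; exists m => //; apply/allP.
- rewrite eval_minterms // => /hasP [m Hm /allP Hv].
  by apply: eval_monotone (H m Hm) => // x; exact: Hv.
Qed.

Lemma eval_bits_of n m f : {subset vars f <= iota 0 n} ->
  eval_bits (bits_of n m) f = eval (fun x => x \in m) f.
Proof. by move=> H; apply: eq_in_eval => x /H; rewrite mem_iota => Hx; rewrite nth_mkseq. Qed.

Lemma vars_subst1 x c f : vars c = [::] -> {subset vars (subst1 x c f) <= vars f}.
Proof.
move=> Hc z; rewrite /subst1 vars_subst => /flatten_mapP [y Hy].
by case: eqP => _; rewrite ?Hc // inE => /eqP ->.
Qed.

Lemma negation_free_subst1 x c f : negation_free c -> negation_free f ->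
  negation_free (subst1 x c f).
Proof.
move=> Nc; rewrite /subst1; elim: f => //= [y _|a IHa b IHb|a IHa b IHb]; first by case: eqP.
- by case/andP => /IHa -> /IHb ->.
- by case/andP => /IHa -> /IHb ->.
Qed.

Lemma nontrivial_minterms n u t x : negation_free u -> negation_free t ->
  {subset vars t <= iota 0 n} -> nontrivial u t -> x \in vars t ->
  has (fun a => ~~ eval_bits a (subst1 x FBot t)) (map (bits_of n) (minterms (subst1 x FTop u))).
Proof.
move=> Nu Nt Vt Hnt Hx; apply/negPn/negP => Hno; apply: (Hnt x); first by rewrite mem_cat Hx orbT.
apply/(valid_minterms (negation_free_subst1 _ _ Nu) (negation_free_subst1 _ _ Nt)) => // m Hm.
rewrite -(@eval_bits_of n); last by move=> z /(@vars_subst1 x FBot t erefl) /Vt.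
by apply/negPn/negP => Hf; case/negP: Hno; apply/hasP; exists (bits_of n m) => //; exact: map_f.
Qed.

Lemma check_premise_advance n C u t : check_premise n C u -> t \in C ->
  negation_free u -> vars u = iota 0 n ->
  negation_free t -> perm_eq (vars t) (iota 0 n) ->
  valid u t -> nontrivial u t -> advance u t.
Proof.
move=> Hch HtC Nu Vu Nt Vt Hv Hnt.
have Vt' : {subset vars t <= iota 0 n} by move=> x; rewrite (perm_mem Vt).
have Vu' : {subset vars u <= iota 0 n} by move=> x; rewrite Vu.
move: Hch; rewrite /check_premise lazy_allE => /allP /(_ t HtC).
have -> : lazy_all (eval_bits^~ t) [seq bits_of n m | m <- minterms u].
  rewrite lazy_allE; apply/allP => _ /mapP [m Hm ->]; rewrite eval_bits_of //.
  exact: (proj1 (valid_minterms Nu Nt) Hv).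
have -> : lazy_all (fun x => lazy_has (fun a => ~~ eval_bits a (subst1 x FBot t))
     (nth [::] [seq [seq bits_of n m | m <- minterms (subst1 y FTop u)] | y <- iota 0 n] x))
     (iota 0 n).
  rewrite lazy_allE; apply/allP => x; rewrite mem_iota add0n => /andP [_ Hx].
  rewrite (nth_map 0) ?size_iota // nth_iota // lazy_hasE.
  by apply: nontrivial_minterms; rewrite // (perm_mem Vt) mem_iota Hx.
case: formula_eqbP => [-> _|_] /=; first by left; exact: ac_refl.
rewrite lazy_hasE => /hasP [_ /mapP [g Hg ->]] /=; rewrite lazy_allE => /allP Hgt.
move: Hg; rewrite mem_filter => /andP [/and4P [Vg Cg Ng]].
rewrite lazy_hasE => /hasP [_ /mapP [m Hm ->]] Hmu Hg.
right; exists g; last first.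
  apply/(valid_minterms Ng Nt) => m' Hm'; rewrite -(@eval_bits_of n) //.
  by apply: Hgt; exact: map_f.
split=> //; first by apply: steps_sound Hg; rewrite /linear Vu iota_uniq.
  by rewrite Vu.
exists (fun x => x \in m); rewrite -(eval_bits_of _ Vu') Hmu andbT eval_minterms //.
by apply/hasP; exists m => //; apply/allP.
Qed.

Lemma check_sizes : all check_size (iota 1 7).
Proof. vm_cast_no_check (erefl true). Qed.

(** * Transport along renamings *)

Lemma eval_ren_inj (r : nat -> nat) (L : seq nat) v : {in L &, injective r} ->
  exists w, forall f, {subset vars f <= L} -> eval w (ren r f) = eval v f.
Proof.
move=> Hinj; exists (fun y => has (fun z => (r z == y) && v z) L) => f Hf.
rewrite eval_ren; apply: eq_in_eval => z /Hf Hz /=.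
apply/hasP/idP => [[z' Hz' /andP [/eqP E Hv]]|Hv]; last by exists z; rewrite ?eqxx.
by rewrite -(Hinj _ _ Hz' Hz E).
Qed.

Lemma valid_ren_inj (r : nat -> nat) (L : seq nat) a b : {in L &, injective r} ->
  {subset vars a <= L} -> {subset vars b <= L} ->
  valid (ren r a) (ren r b) -> valid a b.
Proof.
move=> Hinj Ha Hb H v; have [w Hw] := eval_ren_inj v Hinj.
by rewrite -(Hw a Ha) -(Hw b Hb); apply: H.
Qed.

Lemma subst1_ren r x c f : vars c = [::] ->
  {in vars f, forall z, (r z == r x) = (z == x)} ->
  subst1 (r x) c (ren r f) = ren r (subst1 x c f).
Proof.
move=> Hc; have Hrc : ren r c = c by rewrite -[RHS]ren_id; apply: eq_in_ren; rewrite Hc.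
rewrite /subst1; elim: f => //= [z|z|a IHa b IHb|a IHa b IHb] H.
- by rewrite H ?inE //; case: eqP => _; rewrite ?Hrc.
- by rewrite H ?inE // ren_fneg; case: eqP => _; rewrite ?Hrc.
- by rewrite IHa ?IHb // => z Hz; apply: H; rewrite mem_cat Hz ?orbT.
- by rewrite IHa ?IHb // => z Hz; apply: H; rewrite mem_cat Hz ?orbT.
Qed.

Lemma nontrivial_ren r a b : {in inf_vars a b &, injective r} ->
  nontrivial a b -> nontrivial (ren r a) (ren r b).
Proof.
move=> Hinj Hnt y; rewrite /inf_vars !vars_ren -map_cat => /mapP [x Hx ->] Htr.
apply: (Hnt x Hx).
have Hia : {subset vars a <= inf_vars a b} by move=> z Hz; rewrite mem_cat Hz.
have Hib : {subset vars b <= inf_vars a b} by move=> z Hz; rewrite mem_cat Hz orbT.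
have Hr f : {subset vars f <= inf_vars a b} -> {in vars f, forall z, (r z == r x) = (z == x)}.
  by move=> Hf z Hz; apply/eqP/eqP => [|->] //; apply: Hinj => //; exact: Hf.
apply: (valid_ren_inj Hinj).
- by move=> z /(@vars_subst1 x FTop a erefl) /Hia.
- by move=> z /(@vars_subst1 x FBot b erefl) /Hib.
rewrite -!subst1_ren //.
- exact: Hr Hib.
- exact: Hr Hia.
Qed.

Lemma nontrivial_ac a b a' b' : ac a a' -> ac b b' -> nontrivial a b -> nontrivial a' b'.
Proof.
move=> Ha Hb Hnt x Hx Htr; apply: (Hnt x).
  by rewrite /inf_vars mem_cat (perm_mem (ac_vars Ha)) (perm_mem (ac_vars Hb)) -mem_cat.
by apply: valid_ac Htr; apply: ac_subst; exact: ac_sym.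
Qed.

Lemma nontrivial_weaken a a' b : valid a a' -> perm_eq (vars a) (vars a') ->
  nontrivial a b -> nontrivial a' b.
Proof.
move=> Hv Hp Hnt x Hx Htr; apply: (Hnt x).
  by rewrite /inf_vars mem_cat (perm_mem Hp) -mem_cat.
move: Htr; rewrite /trivial_at /subst1 => Htr.
by apply: valid_trans Htr; exact: valid_subst.
Qed.

Lemma advance_ac a a' b b' : ac a a' -> ac b b' -> advance a b -> advance a' b'.
Proof.
move=> Ha Hb [Hab|[g [Hstep Hvars Cg Ng [v Hv]] Hg]].
  by left; exact: ac_trans (ac_sym Ha) (ac_trans Hab Hb).
right; exists g; last exact: valid_ac (ac_refl g) Hb Hg.
split=> //; first exact: ac_rsq (ac_sym Ha) Hstep.
  exact: perm_trans Hvars (ac_vars Ha).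
by exists v; rewrite -(ac_eval v Ha).
Qed.

Lemma advance_ren r a b : {in vars a &, injective r} -> {subset vars b <= vars a} ->
  advance a b -> advance (ren r a) (ren r b).
Proof.
move=> Hinj Hb [Hab|[g [Hstep Hvars Cg Ng [v Hv]] Hg]]; first by left; exact: ac_ren.
right; exists (ren r g); last exact: valid_ren.
split; rewrite ?constant_free_ren ?negation_free_ren //.
- exact: (@rsq_ren SM SM_vars r a g Hstep Hinj).
- by rewrite !vars_ren perm_map.
have [w Hw] := eval_ren_inj v Hinj.
by exists w; rewrite !Hw // => x; rewrite (perm_mem Hvars).
Qed.

Lemma map_index_iota (s : seq nat) : uniq s -> map (index^~ s) s = iota 0 (size s).
Proof.
move=> Hs; apply: (@eq_from_nth _ 0); first by rewrite size_map size_iota.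
by move=> i; rewrite size_map => Hi; rewrite (nth_map 0) // nth_iota // index_uniq.
Qed.

Lemma advance_ren_inv r phi psi : {in vars phi &, injective r} ->
  {subset vars psi <= vars phi} -> advance (ren r phi) (ren r psi) -> advance phi psi.
Proof.
move=> Hinj Hsub Hadv.
pose ri y := nth 0 (vars phi) (find (fun x => r x == y) (vars phi)).
have Hri : {in vars phi, cancel r ri}.
  move=> x Hx; have Hhas : has (fun z => r z == r x) (vars phi) by apply/hasP; exists x.
  apply: (Hinj) => //; last exact/eqP/(nth_find 0 Hhas).
  by rewrite mem_nth // -has_find.
have Hri_inj : {in vars (ren r phi) &, injective ri}.
  rewrite vars_ren => _ _ /mapP [z1 Hz1 ->] /mapP [z2 Hz2 ->] E.
  by rewrite -(Hri z1 Hz1) -(Hri z2 Hz2) E.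
have Hsub' : {subset vars (ren r psi) <= vars (ren r phi)}.
  by rewrite !vars_ren => _ /mapP [z Hz ->]; apply/map_f/Hsub.
have := advance_ren Hri_inj Hsub' Hadv.
by rewrite !ren_cancel // => x /Hsub /Hri.
Qed.

Lemma check_size_small n : 0 < n < 8 -> check_size n.
Proof. by move=> Hn; apply: (allP check_sizes); rewrite mem_iota. Qed.

Lemma advance_canonical n phi psi : 0 < n < 8 -> vars phi = iota 0 n ->
  perm_eq (vars psi) (iota 0 n) ->
  constant_free phi -> constant_free psi -> negation_free phi -> negation_free psi ->
  valid phi psi -> nontrivial phi psi -> advance phi psi.
Proof.
move=> Hn Vphi Vpsi Cphi Cpsi Nphi Npsi Hv Hnt.
have Hac := normalize_ac phi; set phi1 := normalize phi in Hac.
have V1 : perm_eq (vars phi1) (iota 0 n) by rewrite -Vphi perm_sym ac_vars.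
have U1 : uniq (vars phi1) by rewrite (perm_uniq V1) iota_uniq.
have S1 : size (vars phi1) = n by rewrite (perm_size V1) size_iota.
have Hsub : {subset vars psi <= vars phi1} by move=> x; rewrite (perm_mem Vpsi) (perm_mem V1).
set tau := index^~ (vars phi1).
have Htau : {in inf_vars phi1 psi &, injective tau}.
  by move=> x y; rewrite !mem_cat => /orP [|/Hsub] Hx /orP [|/Hsub] Hy; apply: index_inj.
have Vu : vars (ren tau phi1) = iota 0 n by rewrite vars_ren map_index_iota // S1.
have Vt : perm_eq (vars (ren tau psi)) (iota 0 n).
  by rewrite vars_ren -S1 -(map_index_iota U1) perm_map // (perm_trans Vpsi) // perm_sym.
have [t Ht Hact] : exists2 t, t \in candidates n (iota 0 n) & ac (ren tau psi) t.
  by apply: candidates_complete; rewrite ?iota_uniq ?size_iota ?constant_free_ren ?negation_free_ren.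
apply: advance_ac (ac_sym Hac) (ac_refl psi) _.
apply: (advance_ren_inv (r := tau)) => //; first by move=> x y Hx Hy; apply: Htau; rewrite mem_cat ?Hx ?Hy.
apply: advance_ac (ac_refl _) (ac_sym Hact) _.
apply: (@check_premise_advance n (candidates n (iota 0 n))) => //.
- have := check_size_small Hn; rewrite /check_size lazy_allE => /allP; apply.
  apply: mem_dedup_adjacent; rewrite mem_sort; apply/mapP; exists phi => //.
  by apply: trees_complete; rewrite ?Vphi.
- by rewrite negation_free_ren -(ac_negation_free Hac).
- by rewrite -(ac_negation_free Hact) negation_free_ren.
- by apply: perm_trans Vt; rewrite perm_sym ac_vars.
- exact (valid_ac (ac_refl _) Hact (valid_ren (r := tau) (valid_ac Hac (ac_refl _) Hv))).
- exact (nontrivial_ac (ac_refl _) Hact (nontrivial_ren Htau (nontrivial_ac Hac (ac_refl _) Hnt))).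
Qed.

Lemma advance_small phi psi : size (vars phi) < 8 -> linear phi ->
  perm_eq (vars phi) (vars psi) ->
  constant_free phi -> constant_free psi -> negation_free phi -> negation_free psi ->
  valid phi psi -> nontrivial phi psi -> advance phi psi.
Proof.
move=> H8 Lphi Hp Cphi Cpsi Nphi Npsi Hv Hnt.
have Hsub : {subset vars psi <= vars phi} by move=> x; rewrite (perm_mem Hp).
set rho := index^~ (vars phi).
have Hrho : {in inf_vars phi psi &, injective rho}.
  by move=> x y; rewrite !mem_cat => /orP [|/Hsub] Hx /orP [|/Hsub] Hy; apply: index_inj.
apply: (advance_ren_inv (r := rho)) => //; first by move=> x y Hx Hy; apply: Hrho; rewrite mem_cat ?Hx ?Hy.
apply: (@advance_canonical (size (vars phi))).
- by rewrite H8 lt0n size_eq0 constant_free_vars.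
- by rewrite vars_ren map_index_iota.
- by rewrite vars_ren -(map_index_iota Lphi) perm_map // perm_sym.
- by rewrite constant_free_ren.
- by rewrite constant_free_ren.
- by rewrite negation_free_ren.
- by rewrite negation_free_ren.
- exact (valid_ren Hv).
- exact (nontrivial_ren Hrho Hnt).
Qed.

(** * Induction on the number of models *)

Fixpoint bitseqs (n : nat) : seq (seq bool) :=
  if n is n'.+1 then [seq b :: a | b <- [:: false; true], a <- bitseqs n'] else [:: [::]].

Definition models (V : seq nat) (f : formula) : nat :=
  count (fun a => eval (fun x => nth false a (index x V)) f) (bitseqs (size V)).

Lemma mem_bitseqs a : a \in bitseqs (size a).
Proof.
elim: a => [|b a IH]; first by rewrite inE.
by apply: (@allpairs_f _ _ _ (fun b a => b :: a)) => //; case: b.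
Qed.

Lemma count_lt (T : eqType) (p q : pred T) s x : subpred p q ->
  x \in s -> q x -> ~~ p x -> count p s < count q s.
Proof.
move=> Hpq; elim: s => // y s IH; rewrite inE => /orP [/eqP <-|Hx] Hq Hp /=.
- by rewrite (negbTE Hp) Hq add0n add1n ltnS; exact: sub_count.
- by rewrite -addnS; apply: leq_add (IH Hx Hq Hp); case: (p y) (Hpq y) => // ->.
Qed.

Lemma models_lt V f g v : {subset vars f <= V} -> {subset vars g <= V} ->
  valid f g -> eval v g -> ~~ eval v f -> models V f < models V g.
Proof.
move=> Hf Hg Hv Hvg Hvf; apply: (@count_lt _ _ _ _ (map v V)).
- by move=> a; apply: Hv.
- by rewrite -(size_map v V) mem_bitseqs.
- rewrite -(eq_in_eval (v := v)) // => x /Hg Hx.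
  by rewrite (nth_map 0) ?index_mem // nth_index.
- rewrite -(eq_in_eval (v := v)) // => x /Hf Hx.
  by rewrite (nth_map 0) ?index_mem // nth_index.
Qed.

Lemma derivable_small k V phi psi : size (bitseqs (size V)) - models V phi < k ->
  size V < 8 -> uniq V -> perm_eq (vars phi) V -> perm_eq (vars phi) (vars psi) ->
  constant_free phi -> constant_free psi -> negation_free phi -> negation_free psi ->
  valid phi psi -> nontrivial phi psi -> derivable SM phi psi.
Proof.
elim: k phi => // k IH phi Hk H8 HV HpV Hp Cphi Cpsi Nphi Npsi Hv Hnt.
have Lphi : linear phi by rewrite /linear (perm_uniq HpV).
have H8' : size (vars phi) < 8 by rewrite (perm_size HpV).
case: (advance_small H8' Lphi Hp Cphi Cpsi Nphi Npsi Hv Hnt) => [Hac|[phi' Hstep Hv']].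
  by apply: rt_step; right.
case: Hstep => Hrsq Hvars Cphi' Nphi' [v /andP [Hv1 Hv2]].
have HpV' : perm_eq (vars phi') V := perm_trans Hvars HpV.
have Hmodels : models V phi < models V phi'.
  by apply: (models_lt (v := v)) (rsq_valid SM_valid Hrsq) Hv1 Hv2 => x;
     rewrite ?(perm_mem HpV) ?(perm_mem HpV').
apply: (rt_trans _ _ _ phi'); first by apply: rt_step; left.
apply: IH => //.
- have Hle : models V phi' <= size (bitseqs (size V)) by apply: count_size.
  by move: Hk Hmodels Hle; clear; lia.
- exact: perm_trans Hvars Hp.
- by apply: nontrivial_weaken Hnt; [exact (rsq_valid SM_valid Hrsq)|rewrite perm_sym].
Qed.

Theorem theorem2p13 (n : nat) (phi psi : formula) :
  n < 8 ->
  linear phi -> linear psi ->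
  constant_free phi -> constant_free psi ->
  negation_free phi -> negation_free psi ->
  perm_eq (vars phi) (vars psi) -> size (vars phi) = n ->
  valid phi psi -> nontrivial phi psi ->
  derivable SM phi psi.
Proof.
move=> Hn8 Lphi _ Cphi Cpsi Nphi Npsi Hp Hsz Hv Hnt.
apply: (@derivable_small (size (bitseqs (size (vars phi)))).+1 (vars phi)) => //.
- by rewrite ltnS leq_subr.
- by rewrite Hsz.
Qed.
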